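(* Let $\alpha\ge1$ and for $n=0,1,\dots$ let $$z_n(x)=L_{1,1+n}^{II,(\alpha)}(x)\frac{e^{-x/2}}{S(x)}=e^{-x/2}\Bigl(-xL_{n-1}^{(\alpha+2)}(x)+\alpha\Bigl(1+\frac{1}{x+\alpha}\Bigr)L_n^{(\alpha+1)}(x)\Bigr),\qquad x\ge0,$$ where $S(x)=-x-\alpha$, and let $c_n$ be the constant with $c_nz_n(0)=1$. Then $\|c_nz_n\|_{\infty,[0,\infty)}=c_nz_n(0)=1$ for all $n=0,1,\dots$.
   Context: $L_n^{(\beta)}$ is the classical Laguerre polynomial, with $L_{-1}^{(\beta)}\equiv0$. $L_{1,1+n}^{II,(\alpha)}$ is the type II exceptional Laguerre polynomial of codimension $1$, with $S(x)=L_1^{(-\alpha-1)}(x)=-x-\alpha$; the displayed explicit expression is taken as the definition of $z_n$. *)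

From Stdlib Require Import Reals Lra Arith Factorial.
Open Scope R_scope.

Fixpoint prod_from (k n : nat) (b : R) : R :=
  match n with
  | O => 1
  | S m => if Nat.leb n k then 1 else (b + INR n) * prod_from k m b
  end.

(* Classical (generalized) Laguerre polynomial
   L_n^{(b)}(x) = sum_{k=0}^n (-1)^k binom(n+b, n-k) x^k / k!,
   with binom(n+b, n-k) = prod_{j=k+1}^n (b+j) / (n-k)!. *)
Definition laguerre (n : nat) (b x : R) : R :=
  sum_f_R0 (fun k => (-1) ^ k * (prod_from k n b / INR (fact (n - k)))
                     * x ^ k / INR (fact k)) n.

(* L_{n-1}^{(b)} with the convention L_{-1}^{(b)} = 0 *)
Definition laguerre_pred (n : nat) (b x : R) : R :=
  match n with
  | O => 0
  | S m => laguerre m b x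
  end.

Definition zfun (a : R) (n : nat) (x : R) : R :=
  exp (- x / 2) * (- x * laguerre_pred n (a + 2) x
                   + a * (1 + / (x + a)) * laguerre n (a + 1) x).

(** Write [L_k] for [L_k^(0)].  The classical bound [|L_k(x)| <= e^(x/2)] on
    [x >= 0] comes from Bessel's inequality in the Fock space of power series
    in [t], where [t^j] has squared norm [j!] and multiplication by [t] is
    adjoint to [d/dt]: the series [(t - r)^k e^(r t)] are orthogonal with
    squared norm [k! e^(r^2)], and the coefficient of [t^k] in the [k]-th one
    is [L_k(r^2)].
    Expanding in the basis [L_{n-j}], [L_n^(α+1) = Σ_j binom(α+j, j) L_{n-j}]
    and [-x L_{n-1}^(α+2) + α L_n^(α+1) = Σ_j w_j L_{n-j}] with [w_j >= 0]
    for [α >= 1], so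
    [e^(x/2) z_n(x) = Σ_j w_j L_{n-j}(x) + α/(x+α) Σ_j binom(α+j, j) L_{n-j}(x)];
    since [|L_k(x)| <= e^(x/2)] and [0 <= α/(x+α) <= 1], [|z_n(x)|] is at most
    the sum of all these weights, which is [z_n(0)] because every [L_k(0)] is 1. *)

From Stdlib Require Import Reals Lra Lia Factorial.
Open Scope R_scope.

Lemma sum_f_R0_shift (f : nat -> R) (n : nat) :
  sum_f_R0 f (S n) = f 0%nat + sum_f_R0 (fun i => f (S i)) n.
Proof. exact (decomp_sum f (S n) (Nat.lt_0_succ n)). Qed.

Lemma sum_f_R0_swap (f : nat -> nat -> R) (N M : nat) :
  sum_f_R0 (fun i => sum_f_R0 (f i) M) N = sum_f_R0 (fun j => sum_f_R0 (fun i => f i j) N) M.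
Proof.
  induction N as [|N IH]; [reflexivity|].
  rewrite tech5, IH, <- plus_sum. apply sum_eq. intros j _. now rewrite tech5.
Qed.

Lemma sum_f_R0_trunc (f : nat -> R) (m n : nat) :
  (m <= n)%nat -> (forall i, (m < i <= n)%nat -> f i = 0) -> sum_f_R0 f n = sum_f_R0 f m.
Proof.
  induction 1 as [|n Hmn IH]; intros Hz; [reflexivity|].
  rewrite tech5, IH, (Hz (S n)) by (lia || (intros; apply Hz; lia)). ring.
Qed.

Lemma sum_f_R0_mul_pow0 (f : nat -> R) (n : nat) :
  sum_f_R0 (fun k => f k * 0 ^ k) n = f 0%nat.
Proof.
  induction n as [|n IH]; [simpl; ring|]. rewrite tech5, IH. simpl. ring.
Qed.

Lemma sum_f_R0_last_le (f : nat -> R) (n : nat) :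
  (forall i, 0 <= f i) -> f n <= sum_f_R0 f n.
Proof.
  intros Hf. destruct n as [|n]; simpl; [lra|].
  pose proof (cond_pos_sum f n Hf). lra.
Qed.

Lemma exp_series_cv (x : R) :
  Un_cv (fun N => sum_f_R0 (fun j => / INR (fact j) * x ^ j) N) (exp x).
Proof. exact (proj2_sig (exist_exp x)). Qed.

Lemma Un_cv0_dominated (a v : nat -> R) (K : R) :
  (forall N, Rabs (a N) <= K * Rabs (v N)) -> Un_cv v 0 -> Un_cv a 0.
Proof.
  intros Hav Hv eps Heps.
  pose proof (Rabs_pos K) as HK.
  destruct (Hv (eps / (Rabs K + 1))) as [N0 HN0]; [apply Rdiv_lt_0_compat; lra|].
  exists N0. intros N HN. specialize (HN0 N HN). specialize (Hav N).
  unfold R_dist in *. rewrite Rminus_0_r in *.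
  apply (Rmult_lt_compat_l (Rabs K + 1)) in HN0; [|lra].
  replace ((Rabs K + 1) * (eps / (Rabs K + 1))) with eps in HN0 by (field; lra).
  pose proof (Rabs_pos (v N)) as Hv0.
  pose proof (Rmult_le_compat_r (Rabs (v N)) _ _ Hv0 (Rle_abs K)). lra.
Qed.

Lemma S_INR_le_pow2 (N : nat) : INR (S N) <= 2 ^ N.
Proof.
  induction N as [|N IH]; [simpl; lra|].
  rewrite !S_INR in *. simpl pow. pose proof (pos_INR N). lra.
Qed.

Lemma pow_geom_fact_cv0 (p : nat) (t : R) :
  Un_cv (fun N => INR (S (S N)) ^ p * t ^ N / INR (fact N)) 0.
Proof.
  apply (Un_cv0_dominated _ (fun N => (2 ^ p * t) ^ N / INR (fact N)) (2 ^ p));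
    [|apply cv_speed_pow_fact].
  intros N. set (q := t ^ N / INR (fact N)).
  replace (INR (S (S N)) ^ p * t ^ N / INR (fact N)) with (INR (S (S N)) ^ p * q)
    by (unfold q, Rdiv; ring).
  replace ((2 ^ p * t) ^ N / INR (fact N)) with ((2 ^ p) ^ N * q)
    by (unfold q, Rdiv; rewrite Rpow_mult_distr; ring).
  assert (Hpow : INR (S (S N)) ^ p <= 2 ^ p * (2 ^ p) ^ N).
  { change (2 ^ p * (2 ^ p) ^ N) with ((2 ^ p) ^ S N).
    rewrite <- pow_mult, Nat.mul_comm, pow_mult.
    apply pow_incr. split; [apply pos_INR | apply S_INR_le_pow2]. }
  rewrite !Rabs_mult, (Rabs_pos_eq (_ ^ p)), (Rabs_pos_eq ((2 ^ p) ^ N))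
    by (apply pow_le; (apply pos_INR || apply pow_le; lra)).
  rewrite <- Rmult_assoc. apply Rmult_le_compat_r; [apply Rabs_pos | exact Hpow].
Qed.

Lemma Un_cv_const (c : R) : Un_cv (fun _ => c) c.
Proof. intros eps Heps. exists 0%nat. intros. unfold R_dist. rewrite Rminus_diag, Rabs_R0. lra. Qed.

(** * Rising binomial coefficients and Laguerre polynomials *)

(* [rbinom N c = c (c+1) ... (c+N-1) / N!], i.e. binom(c+N-1, N) for real [c]. *)
Fixpoint rbinom (N : nat) (c : R) : R :=
  match N with
  | O => 1
  | S M => rbinom M c * (c + INR M) / INR (S M)
  end.

Lemma rbinom_S (N : nat) (c : R) : INR (S N) * rbinom (S N) c = (c + INR N) * rbinom N c.
Proof. cbn [rbinom]. field. apply not_0_INR; lia. Qed.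

Lemma rbinom_1 (N : nat) : rbinom N 1 = 1.
Proof.
  induction N as [|N IH]; [reflexivity|]. cbn [rbinom]. rewrite IH, S_INR.
  field. pose proof (pos_INR N); lra.
Qed.

Lemma rbinom_ge0 (N : nat) (c : R) : 0 <= c -> 0 <= rbinom N c.
Proof.
  intros Hc. induction N as [|N IH]; cbn [rbinom]; [lra|].
  pose proof (pos_INR N). pose proof (lt_0_INR (S N) (Nat.lt_0_succ N)).
  apply Rmult_le_pos; [nra|]. apply Rlt_le, Rinv_0_lt_compat; lra.
Qed.

Lemma rbinom_vandermonde (c d : R) (N : nat) :
  sum_f_R0 (fun j => rbinom j c * rbinom (N - j) d) N = rbinom N (c + d).
Proof.
  induction N as [|N IH]; [simpl; ring|].
  apply (Rmult_eq_reg_l (INR (S N))); [|apply not_0_INR; lia].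
  rewrite rbinom_S, <- IH, scal_sum.
  (* write [S N = j + (S N - j)] and absorb each part into one factor by [rbinom_S] *)
  rewrite (sum_eq _ (fun j => INR j * rbinom j c * rbinom (S N - j) d
                            + rbinom j c * (INR (S N - j) * rbinom (S N - j) d)))
    by (intros j Hj; rewrite minus_INR by lia; ring).
  rewrite plus_sum, sum_f_R0_shift, tech5, Nat.sub_diag.
  rewrite (sum_eq (fun i => INR (S i) * _ * _)
                  (fun j => (c + INR j) * rbinom j c * rbinom (N - j) d))
    by (intros j Hj; simpl Nat.sub; rewrite rbinom_S; ring).
  rewrite (sum_eq (fun j => rbinom j c * (INR (S N - j) * _))
                  (fun j => rbinom j c * ((d + INR (N - j)) * rbinom (N - j) d)))
    by (intros j Hj; replace (S N - j)%nat with (S (N - j)) by lia; now rewrite rbinom_S).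
  simpl INR. rewrite !Rmult_0_l, Rmult_0_r, Rplus_0_l, Rplus_0_r.
  rewrite <- plus_sum, scal_sum. apply sum_eq. intros j Hj. rewrite minus_INR by lia. ring.
Qed.

Lemma prod_from_rbinom (b : R) (k N : nat) :
  prod_from k (k + N) b = rbinom N (b + INR k + 1) * INR (fact N).
Proof.
  induction N as [|N IH].
  - rewrite Nat.add_0_r. destruct k; simpl; [ring|]. rewrite Nat.leb_refl. ring.
  - rewrite Nat.add_succ_r. cbn [prod_from].
    replace (Nat.leb (S (k + N)) k) with false by (symmetry; apply Nat.leb_gt; lia).
    rewrite IH, fact_simpl, mult_INR. cbn [rbinom].
    rewrite S_INR, plus_INR, S_INR. field. pose proof (pos_INR N); lra.
Qed.

Definition lag_coef (n : nat) (b : R) (k : nat) : R :=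
  if (k <=? n)%nat then (-1) ^ k * rbinom (n - k) (b + INR k + 1) / INR (fact k) else 0.

Lemma laguerre_coefE (n M : nat) (b x : R) : (n <= M)%nat ->
  laguerre n b x = sum_f_R0 (fun k => lag_coef n b k * x ^ k) M.
Proof.
  intros HM. rewrite (sum_f_R0_trunc _ n M HM).
  - apply sum_eq. intros k Hk. unfold lag_coef.
    replace (k <=? n)%nat with true by (symmetry; apply Nat.leb_le; lia).
    replace n with (k + (n - k))%nat at 1 by lia. rewrite prod_from_rbinom.
    field. split; apply INR_fact_neq_0.
  - intros k Hk. unfold lag_coef.
    replace (k <=? n)%nat with false by (symmetry; apply Nat.leb_gt; lia). ring.
Qed.

Lemma laguerre_at0 (n : nat) (b : R) : laguerre n b 0 = rbinom n (b + 1).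
Proof.
  rewrite (laguerre_coefE n n), sum_f_R0_mul_pow0 by lia. unfold lag_coef.
  simpl. rewrite Nat.sub_0_r, Rplus_0_r. field.
Qed.

Lemma laguerre_convolution (n : nat) (c x : R) :
  laguerre n c x = sum_f_R0 (fun j => rbinom j c * laguerre (n - j) 0 x) n.
Proof.
  rewrite (sum_eq _ (fun j => sum_f_R0 (fun k => rbinom j c * lag_coef (n - j) 0 k * x ^ k) n)).
  2:{ intros j Hj. rewrite (laguerre_coefE (n - j) n) by lia. rewrite scal_sum.
      apply sum_eq. intros; ring. }
  rewrite sum_f_R0_swap, (laguerre_coefE n n) by lia.
  apply sum_eq. intros k Hk.
  rewrite <- scal_sum, Rmult_comm. f_equal.
  rewrite (sum_f_R0_trunc _ (n - k) n) by (lia || (intros j Hj; unfold lag_coef;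
     replace (k <=? n - j)%nat with false by (symmetry; apply Nat.leb_gt; lia); ring)).
  rewrite (sum_eq _ (fun j => rbinom j c * rbinom (n - k - j) (INR k + 1)
                              * ((-1) ^ k / INR (fact k)))).
  2:{ intros j Hj. unfold lag_coef.
      replace (k <=? n - j)%nat with true by (symmetry; apply Nat.leb_le; lia).
      replace (n - j - k)%nat with (n - k - j)%nat by lia.
      rewrite Rplus_0_l. field. apply INR_fact_neq_0. }
  rewrite <- scal_sum, rbinom_vandermonde. unfold lag_coef.
  replace (k <=? n)%nat with true by (symmetry; apply Nat.leb_le; lia).
  replace (c + (INR k + 1)) with (c + INR k + 1) by ring. field. apply INR_fact_neq_0.
Qed.

Lemma lag_coef_rec0 (m : nat) (b : R) :
  (INR m + b + 1) * lag_coef m b 0 = INR (S m) * lag_coef (S m) b 0.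
Proof.
  unfold lag_coef; simpl Nat.leb; cbv iota. rewrite !Nat.sub_0_r. cbn [rbinom].
  change (INR 0) with 0. field. split; [apply not_0_INR; lia | apply INR_fact_neq_0].
Qed.

Lemma lag_coef_recS (m k : nat) (b : R) : (k <= m)%nat ->
  lag_coef m (b + 1) k = (INR m + b + 1) * lag_coef m b (S k) - INR (S m) * lag_coef (S m) b (S k).
Proof.
  intros Hk. unfold lag_coef.
  replace (k <=? m)%nat with true by (symmetry; apply Nat.leb_le; lia).
  replace (S k <=? S m)%nat with true by (symmetry; apply Nat.leb_le; lia).
  rewrite Nat.sub_succ, fact_simpl, mult_INR.
  replace (b + 1 + INR k + 1) with (b + INR (S k) + 1) by (rewrite S_INR; ring).
  assert (INR (S k) <> 0) by (apply not_0_INR; lia).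
  assert (INR (fact k) <> 0) by apply INR_fact_neq_0.
  destruct (Nat.eq_dec k m) as [->|Hne].
  - replace (S m <=? m)%nat with false by (symmetry; apply Nat.leb_gt; lia).
    rewrite Nat.sub_diag. simpl pow. field. auto.
  - replace (S k <=? m)%nat with true by (symmetry; apply Nat.leb_le; lia).
    replace (m - k)%nat with (S (m - S k)) by lia.
    assert (Hm : INR m = INR (S k) + INR (m - S k)) by (rewrite <- plus_INR; f_equal; lia).
    set (M := (m - S k)%nat) in *. cbn [rbinom pow]. rewrite !S_INR in *. rewrite Hm.
    assert (INR M + 1 <> 0) by (pose proof (pos_INR M); lra).
    field. auto.
Qed.

Lemma laguerre_rec (m : nat) (b x : R) :
  x * laguerre m (b + 1) x = (INR m + b + 1) * laguerre m b x - INR (S m) * laguerre (S m) b x.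
Proof.
  rewrite (laguerre_coefE m m), (laguerre_coefE m (S m)), (laguerre_coefE (S m) (S m)) by lia.
  rewrite !scal_sum, <- minus_sum, sum_f_R0_shift.
  replace (_ * _ * (INR m + b + 1) - _ * _ * INR (S m)) with 0
    by (pose proof (lag_coef_rec0 m b); simpl pow; lra).
  rewrite Rplus_0_l. apply sum_eq. intros k Hk.
  rewrite (lag_coef_recS m k) by lia. simpl pow. ring.
Qed.

(** * The bound [|L_n^(0)(x)| <= e^(x/2)] *)

(* A sequence [f] stands for the power series [sum_j f j t^j], and [fock_sum] is
   a partial sum of the Fock inner product, in which [t^j] has squared norm [j!]. *)
Definition ps_mulX (f : nat -> R) (j : nat) : R :=
  match j with O => 0 | S i => f i end.

Definition ps_deriv (f : nat -> R) (j : nat) : R := INR (S j) * f (S j).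

Definition fock_sum (N : nat) (f g : nat -> R) : R :=
  sum_f_R0 (fun j => INR (fact j) * f j * g j) N.

Lemma fock_sum_comm (N : nat) (f g : nat -> R) : fock_sum N f g = fock_sum N g f.
Proof. apply sum_eq. intros; ring. Qed.

Lemma fock_sum_mulX_l (N : nat) (f g : nat -> R) :
  fock_sum N (ps_mulX f) g = fock_sum N f (ps_deriv g) - INR (fact (S N)) * f N * g (S N).
Proof.
  unfold fock_sum, ps_deriv. induction N as [|N IH].
  - simpl. ring.
  - rewrite !tech5, IH, (fact_simpl (S N)), mult_INR. simpl ps_mulX.
    rewrite (fact_simpl N), mult_INR. ring.
Qed.

(* The coefficients of [(t - r)^n e^(r t)]. *)
Fixpoint ecoef (r : R) (n : nat) : nat -> R :=
  match n with
  | O => fun j => r ^ j / INR (fact j)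
  | S m => fun j => ps_mulX (ecoef r m) j - r * ecoef r m j
  end.

Lemma ecoef_deriv (r : R) (m j : nat) :
  ps_deriv (ecoef r m) j - r * ecoef r m j = INR m * ecoef r (pred m) j.
Proof.
  unfold ps_deriv. revert j. induction m as [|m IH]; intros j.
  - cbn [ecoef]. rewrite fact_simpl, mult_INR. simpl pow. change (INR 0) with 0.
    field. split; [apply INR_fact_neq_0 | apply not_0_INR; lia].
  - cbn [ecoef pred ps_mulX].
    assert (Hm : INR m * ecoef r m j
                 = INR m * (ps_mulX (ecoef r (pred m)) j - r * ecoef r (pred m) j)).
    { destruct m; [simpl; ring | reflexivity]. }
    assert (Hj : INR j * ecoef r m j - r * ps_mulX (ecoef r m) j
                 = INR m * ps_mulX (ecoef r (pred m)) j).
    { destruct j as [|i]; simpl ps_mulX; [simpl; ring|]. rewrite <- IH. ring. }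
    transitivity (ecoef r m j + (INR j * ecoef r m j - r * ps_mulX (ecoef r m) j)
                  - r * (INR (S j) * ecoef r m (S j) - r * ecoef r m j)); [rewrite S_INR; ring|].
    rewrite Hj, IH, S_INR. lra.
Qed.

Lemma fock_sum_ecoef_S (r : R) (n m N : nat) :
  fock_sum N (ecoef r (S n)) (ecoef r m)
  = INR m * fock_sum N (ecoef r n) (ecoef r (pred m))
    - INR (fact (S N)) * ecoef r n N * ecoef r m (S N).
Proof.
  transitivity (fock_sum N (ps_mulX (ecoef r n)) (ecoef r m)
                - r * fock_sum N (ecoef r n) (ecoef r m)).
  { unfold fock_sum. rewrite scal_sum, <- minus_sum. apply sum_eq. intros; cbn [ecoef]; ring. }
  rewrite fock_sum_mulX_l.
  enough (fock_sum N (ecoef r n) (ps_deriv (ecoef r m)) - r * fock_sum N (ecoef r n) (ecoef r m)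
          = INR m * fock_sum N (ecoef r n) (ecoef r (pred m))) by lra.
  unfold fock_sum. rewrite !scal_sum, <- minus_sum. apply sum_eq. intros j _.
  transitivity (INR (fact j) * ecoef r n j * (ps_deriv (ecoef r m) j - r * ecoef r m j));
    [ring | rewrite ecoef_deriv; ring].
Qed.

Lemma ecoef_bound (r : R) (n j : nat) :
  INR (fact j) * Rabs (ecoef r n j) <= INR (S j) ^ n * (1 + Rabs r) ^ (n + j).
Proof.
  set (s := Rabs r). assert (Hs : 0 <= s) by apply Rabs_pos.
  revert j. induction n as [|n IH]; intros j.
  - cbn [ecoef]. unfold Rdiv. rewrite Rabs_mult, Rabs_inv, <- RPow_abs.
    rewrite (Rabs_pos_eq (INR (fact j))) by apply pos_INR.
    field_simplify; [|apply INR_fact_neq_0]. simpl. apply pow_incr. fold s. lra.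
  - cbn [ecoef]. set (X := INR (S j) ^ n * (1 + s) ^ (n + j)).
    assert (HX : 0 <= X) by (apply Rmult_le_pos; apply pow_le; [apply pos_INR | lra]).
    assert (Hshift : INR (fact j) * Rabs (ps_mulX (ecoef r n) j) <= INR j * X).
    { destruct j as [|i]; simpl ps_mulX.
      - rewrite Rabs_R0. simpl INR. lra.
      - rewrite fact_simpl, mult_INR, Rmult_assoc. apply Rmult_le_compat_l; [apply pos_INR|].
        eapply Rle_trans; [apply IH|]. unfold X.
        apply Rmult_le_compat; try (apply pow_le; (apply pos_INR || lra)).
        + apply pow_incr. split; [apply pos_INR | apply le_INR; lia].
        + apply Rle_pow; [lra | lia]. }
    assert (Htri : Rabs (ps_mulX (ecoef r n) j - r * ecoef r n j)
                   <= Rabs (ps_mulX (ecoef r n) j) + s * Rabs (ecoef r n j)).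
    { unfold Rminus. eapply Rle_trans; [apply Rabs_triang|].
      rewrite Rabs_Ropp, Rabs_mult. fold s. lra. }
    apply (Rmult_le_compat_l (INR (fact j))) in Htri; [|apply pos_INR].
    pose proof (IH j) as Hj. fold X in Hj.
    replace (INR (S j) ^ S n * (1 + s) ^ (S n + j)) with ((INR j + 1) * (1 + s) * X)
      by (unfold X; rewrite S_INR; simpl; ring).
    pose proof (Rmult_le_compat_l s _ _ Hs Hj).
    assert (0 <= INR j * s * X)
      by (apply Rmult_le_pos; [apply Rmult_le_pos; [apply pos_INR|]|]; auto).
    lra.
Qed.

Lemma fock_sum_ecoef_rem_cv0 (r : R) (n m : nat) :
  Un_cv (fun N => INR (fact (S N)) * ecoef r n N * ecoef r m (S N)) 0.
Proof.
  set (rho := 1 + Rabs r). assert (Hrho : 1 <= rho) by (pose proof (Rabs_pos r); unfold rho; lra).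
  apply (Un_cv0_dominated _ (fun N => INR (S (S N)) ^ (n + m) * (rho ^ 2) ^ N / INR (fact N))
           (rho ^ (n + m + 1))); [|apply pow_geom_fact_cv0].
  intros N.
  set (A := INR (fact N) * Rabs (ecoef r n N)).
  set (B := INR (fact (S N)) * Rabs (ecoef r m (S N))).
  assert (HA : A <= INR (S (S N)) ^ n * rho ^ (n + N)).
  { eapply Rle_trans; [apply ecoef_bound|]. apply Rmult_le_compat_r; [apply pow_le; lra|].
    apply pow_incr. split; [apply pos_INR | apply le_INR; lia]. }
  assert (HB : B <= INR (S (S N)) ^ m * rho ^ (m + S N)) by apply ecoef_bound.
  assert (HF : 0 < INR (fact N)) by (apply lt_0_INR, lt_O_fact).
  replace (Rabs (INR (fact (S N)) * ecoef r n N * ecoef r m (S N))) with (A * B / INR (fact N)).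
  2:{ unfold A, B. rewrite !Rabs_mult, (Rabs_pos_eq (INR (fact (S N)))) by apply pos_INR.
      field. lra. }
  rewrite Rabs_pos_eq.
  2:{ apply Rmult_le_pos; [apply Rmult_le_pos; repeat apply pow_le; (apply pos_INR || lra)|].
      apply Rlt_le, Rinv_0_lt_compat, HF. }
  unfold Rdiv. rewrite <- Rmult_assoc.
  apply Rmult_le_compat_r; [apply Rlt_le, Rinv_0_lt_compat, HF|].
  replace (rho ^ (n + m + 1) * (INR (S (S N)) ^ (n + m) * (rho ^ 2) ^ N))
    with ((INR (S (S N)) ^ n * rho ^ (n + N)) * (INR (S (S N)) ^ m * rho ^ (m + S N))).
  2:{ rewrite <- pow_mult. replace (2 * N)%nat with (N + N)%nat by lia.
      rewrite !pow_add. simpl. ring. }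
  apply Rmult_le_compat; auto; apply Rmult_le_pos; apply pos_INR || apply Rabs_pos.
Qed.

Lemma fock_sum_ecoef_cv (r : R) (n m : nat) :
  Un_cv (fun N => fock_sum N (ecoef r n) (ecoef r m))
        (if (n =? m)%nat then INR (fact n) * exp (r * r) else 0).
Proof.
  revert m. induction n as [|n IH]; intros m.
  - destruct m as [|m]; cbn [Nat.eqb].
    + change (INR (fact 0)) with 1. rewrite Rmult_1_l.
      apply (Un_cv_ext (fun N => sum_f_R0 (fun j => / INR (fact j) * (r * r) ^ j) N));
        [|apply exp_series_cv].
      intros N. apply sum_eq. intros j _. cbn [ecoef].
      rewrite Rpow_mult_distr. field. apply INR_fact_neq_0.
    + apply (Un_cv_ext (fun N => - (INR (fact (S N)) * ecoef r m N * ecoef r 0 (S N)))).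
      { intros N. rewrite fock_sum_comm, fock_sum_ecoef_S. change (INR 0) with 0. ring. }
      rewrite <- Ropp_0. apply CV_opp, fock_sum_ecoef_rem_cv0.
  - apply (Un_cv_ext (fun N => INR m * fock_sum N (ecoef r n) (ecoef r (pred m))
                               - INR (fact (S N)) * ecoef r n N * ecoef r m (S N))).
    { intros N. symmetry. apply fock_sum_ecoef_S. }
    replace (if (S n =? m)%nat then INR (fact (S n)) * exp (r * r) else 0)
      with (INR m * (if (n =? pred m)%nat then INR (fact n) * exp (r * r) else 0) - 0).
    + apply CV_minus; [|apply fock_sum_ecoef_rem_cv0].
      apply CV_mult; [apply Un_cv_const | apply IH].
    + destruct m as [|m]; cbn [Nat.eqb pred]; [simpl; ring|].
      destruct (n =? m)%nat eqn:Hnm; [|ring].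
      apply Nat.eqb_eq in Hnm. subst. rewrite fact_simpl, mult_INR. ring.
Qed.

(* Along the diagonal, the recursion defining [ecoef] is the three-term relation
   [laguerre_rec]. *)
Lemma ecoef_laguerre (r : R) (n k : nat) :
  INR (fact (n + k)) * ecoef r n (n + k) = r ^ k * INR (fact n) * laguerre n (INR k) (r * r).
Proof.
  revert k. induction n as [|n IH]; intros k.
  - cbn [ecoef Nat.add]. unfold laguerre. simpl. field. apply INR_fact_neq_0.
  - rewrite Nat.add_succ_l. cbn [ecoef ps_mulX].
    transitivity (INR (S (n + k)) * (INR (fact (n + k)) * ecoef r n (n + k))
                  - r * (INR (fact (n + S k)) * ecoef r n (n + S k)));
      [rewrite Nat.add_succ_r, fact_simpl, mult_INR; ring|].
    rewrite !IH.
    pose proof (laguerre_rec n (INR k) (r * r)) as Hrec. rewrite <- S_INR in Hrec.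
    replace (r * (r ^ S k * INR (fact n) * laguerre n (INR (S k)) (r * r)))
      with (r ^ k * INR (fact n) * (r * r * laguerre n (INR (S k)) (r * r))) by (simpl; ring).
    rewrite Hrec, fact_simpl, mult_INR, S_INR, plus_INR. ring.
Qed.

Lemma laguerre0_sqr_le_exp (n : nat) (r : R) : laguerre n 0 (r * r) ^ 2 <= exp (r * r).
Proof.
  assert (Hdiag : ecoef r n n = laguerre n 0 (r * r)).
  { pose proof (ecoef_laguerre r n 0) as H. rewrite Nat.add_0_r in H.
    apply (Rmult_eq_reg_l (INR (fact n))); [|apply INR_fact_neq_0].
    rewrite H. simpl. ring. }
  assert (Hfn : 0 < INR (fact n)) by (apply lt_0_INR, lt_O_fact).
  apply (Rmult_le_reg_l (INR (fact n))); [exact Hfn|].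
  rewrite <- Hdiag.
  pose proof (fock_sum_ecoef_cv r n n) as Hcv. rewrite Nat.eqb_refl in Hcv.
  apply Rle_trans with (fock_sum n (ecoef r n) (ecoef r n)).
  - replace (INR (fact n) * ecoef r n n ^ 2) with (INR (fact n) * ecoef r n n * ecoef r n n)
      by ring.
    apply (sum_f_R0_last_le (fun j => INR (fact j) * ecoef r n j * ecoef r n j)).
    intros j. rewrite Rmult_assoc. apply Rmult_le_pos; [apply pos_INR | apply Rle_0_sqr].
  - apply sum_incr; [exact Hcv|].
    intros j. rewrite Rmult_assoc. apply Rmult_le_pos; [apply pos_INR | apply Rle_0_sqr].
Qed.

Lemma laguerre0_abs_le_exp (n : nat) (x : R) : 0 <= x -> Rabs (laguerre n 0 x) <= exp (x / 2).
Proof.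
  intros Hx. rewrite <- (Rabs_pos_eq (exp (x / 2))) by apply Rlt_le, exp_pos.
  apply Rsqr_le_abs_0. unfold Rsqr.
  rewrite <- exp_plus, <- (sqrt_sqrt x Hx).
  replace (sqrt x * sqrt x / 2 + sqrt x * sqrt x / 2) with (sqrt x * sqrt x) by field.
  rewrite <- Rsqr_def, Rsqr_pow2. apply laguerre0_sqr_le_exp.
Qed.

Lemma laguerre0_comb_abs_le (n : nat) (v : nat -> R) (x : R) :
  0 <= x -> (forall j, (j <= n)%nat -> 0 <= v j) ->
  exp (- x / 2) * Rabs (sum_f_R0 (fun j => v j * laguerre (n - j) 0 x) n) <= sum_f_R0 v n.
Proof.
  intros Hx Hv.
  assert (Hinv : exp (- x / 2) * exp (x / 2) = 1)
    by (rewrite <- exp_plus, <- exp_0; f_equal; field).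
  pose proof (exp_pos (- x / 2)).
  apply Rle_trans with (exp (- x / 2) * (exp (x / 2) * sum_f_R0 v n));
    [|rewrite <- Rmult_assoc, Hinv; lra].
  apply Rmult_le_compat_l; [lra|].
  eapply Rle_trans; [apply sum_f_R0_triangle|]. rewrite scal_sum.
  apply sum_Rle. intros j Hj. rewrite Rabs_mult, (Rabs_pos_eq (v j)) by auto.
  apply Rmult_le_compat_l; auto. apply laguerre0_abs_le_exp, Hx.
Qed.

(** * The functions [z_n] *)

Definition zweight (a : R) (n j : nat) : R :=
  (INR n + a) * rbinom j (a + 1) - (INR n + a + 1) * ps_mulX (fun i => rbinom i (a + 1)) j.

Lemma zweight_ge0 (a : R) (n j : nat) : 1 <= a -> (j <= n)%nat -> 0 <= zweight a n j.
Proof.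
  intros Ha Hj. pose proof (pos_INR n). unfold zweight. destruct j as [|i]; cbn [rbinom ps_mulX].
  - lra.
  - assert (Hi : INR i + 1 <= INR n) by (rewrite <- S_INR; apply le_INR, Hj).
    pose proof (pos_INR i). pose proof (rbinom_ge0 i (a + 1) ltac:(lra)).
    rewrite S_INR.
    (* the weight is nonnegative because [i < n] and [a >= 1] give [a (n + a) >= i + 1] *)
    replace ((INR n + a) * (rbinom i (a + 1) * (a + 1 + INR i) / (INR i + 1))
             - (INR n + a + 1) * rbinom i (a + 1))
      with (rbinom i (a + 1) * (a * (INR n + a) - (INR i + 1)) / (INR i + 1)) by (field; lra).
    apply Rle_mult_inv_pos; [|lra]. apply Rmult_le_pos; [assumption | nra].
Qed.

Lemma zfun_numerator_decomp (a : R) (n : nat) (x : R) :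
  - x * laguerre_pred n (a + 2) x + a * laguerre n (a + 1) x
  = sum_f_R0 (fun j => zweight a n j * laguerre (n - j) 0 x) n.
Proof.
  destruct n as [|m].
  - unfold laguerre_pred, zweight, laguerre. simpl. field.
  - unfold laguerre_pred.
    replace (a + 2) with (a + 1 + 1) by ring.
    replace (- x * laguerre m (a + 1 + 1) x) with (- (x * laguerre m (a + 1 + 1) x)) by ring.
    rewrite laguerre_rec, (laguerre_convolution (S m)), (laguerre_convolution m).
    assert (Hshift : sum_f_R0 (fun j => rbinom j (a + 1) * laguerre (m - j) 0 x) m
                     = sum_f_R0 (fun j => ps_mulX (fun i => rbinom i (a + 1)) j
                                          * laguerre (S m - j) 0 x) (S m)).
    { rewrite sum_f_R0_shift. simpl ps_mulX. rewrite Rmult_0_l, Rplus_0_l. reflexivity. }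
    rewrite Hshift.
    rewrite (sum_eq (fun j => zweight a (S m) j * laguerre (S m - j) 0 x)
               (fun j => rbinom j (a + 1) * laguerre (S m - j) 0 x * (INR (S m) + a)
                         - ps_mulX (fun i => rbinom i (a + 1)) j * laguerre (S m - j) 0 x
                           * (INR (S m) + a + 1)))
      by (intros; unfold zweight; ring).
    rewrite minus_sum, <- !scal_sum, S_INR. ring.
Qed.

Lemma zfun_decomp (a : R) (n : nat) (x : R) : 0 < x + a ->
  zfun a n x = exp (- x / 2) *
    (sum_f_R0 (fun j => zweight a n j * laguerre (n - j) 0 x) n
     + a / (x + a) * sum_f_R0 (fun j => rbinom j (a + 1) * laguerre (n - j) 0 x) n).
Proof.
  intros Hxa. rewrite <- zfun_numerator_decomp, <- laguerre_convolution.
  unfold zfun. field. lra.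
Qed.

Lemma zfun_abs_le_at0 (a : R) (n : nat) (x : R) : 1 <= a -> 0 <= x ->
  Rabs (zfun a n x) <= zfun a n 0.
Proof.
  intros Ha Hx.
  assert (Hw : forall j, (j <= n)%nat -> 0 <= zweight a n j) by (intros; apply zweight_ge0; auto).
  assert (Hb : forall j, (j <= n)%nat -> 0 <= rbinom j (a + 1)) by (intros; apply rbinom_ge0; lra).
  assert (Hat0 : forall v : nat -> R,
            sum_f_R0 (fun j => v j * laguerre (n - j) 0 0) n = sum_f_R0 v n).
  { intros v. apply sum_eq. intros j _. rewrite laguerre_at0, Rplus_0_l, rbinom_1. ring. }
  rewrite (zfun_decomp a n 0), !Hat0 by lra.
  replace (- 0 / 2) with 0 by field. rewrite exp_0.
  replace (a / (0 + a)) with 1 by (field; lra).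
  rewrite zfun_decomp by lra.
  set (P := sum_f_R0 (fun j => zweight a n j * laguerre (n - j) 0 x) n).
  set (Q := sum_f_R0 (fun j => rbinom j (a + 1) * laguerre (n - j) 0 x) n).
  pose proof (laguerre0_comb_abs_le n (zweight a n) x Hx Hw) as HP. fold P in HP.
  pose proof (laguerre0_comb_abs_le n (fun j => rbinom j (a + 1)) x Hx Hb) as HQ.
  cbv beta in HQ. fold Q in HQ.
  assert (Hq : 0 <= a / (x + a) <= 1).
  { split; [apply Rle_mult_inv_pos; lra|].
    apply (Rmult_le_reg_r (x + a)); [lra|]. unfold Rdiv. rewrite Rmult_assoc, Rinv_l; lra. }
  pose proof (exp_pos (- x / 2)). pose proof (Rabs_pos Q).
  rewrite Rabs_mult, (Rabs_pos_eq (exp _)) by lra.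
  eapply Rle_trans; [apply Rmult_le_compat_l; [lra | apply Rabs_triang]|].
  rewrite Rabs_mult, (Rabs_pos_eq (a / (x + a))) by lra.
  assert (exp (- x / 2) * (a / (x + a) * Rabs Q) <= exp (- x / 2) * Rabs Q)
    by (apply Rmult_le_compat_l; nra).
  lra.
Qed.

Lemma is_lub_abs_normalized (f : R -> R) (c : R) :
  (forall x, 0 <= x -> Rabs (f x) <= f 0) -> c * f 0 = 1 ->
  is_lub (fun y => exists x, 0 <= x /\ y = Rabs (c * f x)) 1.
Proof.
  intros Hf Hc.
  assert (Hf0 : 0 <= f 0) by (eapply Rle_trans; [apply Rabs_pos | apply Hf, Rle_refl]).
  assert (Hcpos : 0 < c) by (destruct (Rle_or_lt c 0); [nra | assumption]).
  split.
  - intros y [x [Hx ->]]. rewrite Rabs_mult, (Rabs_pos_eq c), <- Hc by lra.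
    apply Rmult_le_compat_l; [lra | apply Hf, Hx].
  - intros b Hb. apply Hb. exists 0. split; [lra|]. rewrite Hc, Rabs_R1. reflexivity.
Qed.

Theorem lemma4 (alpha : R) (n : nat) (c : R) :
  1 <= alpha ->
  c * zfun alpha n 0 = 1 ->
  is_lub (fun y => exists x, 0 <= x /\ y = Rabs (c * zfun alpha n x)) 1.
Proof.
  intros Ha. apply is_lub_abs_normalized. intros x Hx. apply zfun_abs_le_at0; assumption.
Qed.
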